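(* (i) The graph with a single vertex and no arcs is a $2$-gadget. (ii) The directed cycle on three vertices (vertices $1,2,3$, arcs $(1,2),(2,3),(3,1)$) is a $3$-gadget (with any of its vertices as distinguished vertex $1$). (iii) Let $D$ be the oriented graph on vertex set $\{0,1,2,3,4,5\}$ with the 15 arcs $(1,0),(0,2),(2,1),(4,5),(5,3),(3,4),(5,0),(3,1),(4,2),(0,3),(1,4),(2,5),(0,4),(1,5),(2,3)$. Then $D$ is a $4$-gadget when vertex $4$ is taken as the distinguished first vertex, i.e. there are a $D$-function $f$ over $[4]$ and a function $\phi:[4]^{5}\to[4]$ such that $D$ is not $4$-solvable and every $x\in[4]^6$ with $f_v(x)\ne x_v$ for all $v$ satisfies $x_4=\phi(x_0,x_1,x_2,x_3,x_5)$.
   Context: A directed graph $D=(V,E)$ has arcs $E \subseteq \{(u,v)\in V^2 : u \neq v\}$; it is an oriented graph if it never contains both $(u,v)$ and $(v,u)$. $N^-(v)=\{u:(u,v)\in E\}$. For $q\ge2$ let $[q]=\{0,\dots,q-1\}$. A $D$-function over $[q]$ is a map $f=(f_v)_{v\in V}:[q]^V\to[q]^V$ with each $f_v(x)$ depending only on $(x_u)_{u\in N^-(v)}$. $D$ is $q$-solvable if some $D$-function $f$ over $[q]$ has the property that for every $x\in[q]^V$ there is $v$ with $f_v(x)=x_v$. A $q$-gadget is an oriented graph $D$ with vertices labelled $1,\dots,n$ (vertex $1$ being distinguished) which is not $q$-solvable, but for which there exist a $D$-function $f$ over $[q]$ and a function $\phi:[q]^{n-1}\to[q]$ such that every $x\in[q]^n$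 with $f_v(x)\ne x_v$ for all $v$ satisfies $x_1=\phi(x_2,\dots,x_n)$. *)

From mathcomp Require Import all_boot.
Set Implicit Arguments. Unset Strict Implicit. Unset Printing Implicit Defensive.

(* A directed graph on vertex set 'I_n is given by its arc relation E : rel 'I_n,
   E u v meaning (u,v) is an arc.  Configurations x in [q]^V are functions 'I_n -> 'I_q. *)

Definition oriented_graph (n : nat) (E : rel 'I_n) : Prop :=
  forall u v : 'I_n, E u v -> u != v /\ ~~ E v u.

Definition D_function (n q : nat) (E : rel 'I_n)
    (f : ('I_n -> 'I_q) -> 'I_n -> 'I_q) : Prop :=
  forall (v : 'I_n) (x y : 'I_n -> 'I_q),
    (forall u : 'I_n, E u v -> x u = y u) -> f x v = f y v.

Definition q_solvable (n q : nat) (E : rel 'I_n) : Prop :=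
  exists f : ('I_n -> 'I_q) -> 'I_n -> 'I_q,
    D_function E f /\ forall x : 'I_n -> 'I_q, exists v : 'I_n, f x v = x v.

(* The function phi : [q]^{n-1} -> [q]
   of the remaining coordinates is represented as a function of the whole
   configuration that does not depend on the coordinate d. *)
Definition q_gadget (n q : nat) (E : rel 'I_n) (d : 'I_n) : Prop :=
  oriented_graph E /\ ~ q_solvable q E /\
  exists (f : ('I_n -> 'I_q) -> 'I_n -> 'I_q) (phi : ('I_n -> 'I_q) -> 'I_q),
    D_function E f /\
    (forall x y : 'I_n -> 'I_q, (forall v, v != d -> x v = y v) -> phi x = phi y) /\
    (forall x : 'I_n -> 'I_q, (forall v, f x v <> x v) -> x d = phi x).

Definition arcs_rel (n : nat) (s : seq (nat * nat)) : rel 'I_n :=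
  fun u v => (nat_of_ord u, nat_of_ord v) \in s.

Definition single_vertex : rel 'I_1 := fun _ _ => false.

(* directed 3-cycle 1->2->3->1, vertices relabelled 0,1,2 *)
Definition cycle3 : rel 'I_3 := @arcs_rel 3 [:: (0,1); (1,2); (2,0)].

Definition D6 : rel 'I_6 := @arcs_rel 6
  [:: (1,0); (0,2); (2,1); (4,5); (5,3); (3,4); (5,0); (3,1); (4,2);
      (0,3); (1,4); (2,5); (0,4); (1,5); (2,3)].

(* A configuration x has no fixed point of a D-function f when f_v(x) <> x_v
   at every vertex v.  The values of the configuration are chosen one vertex at a time;
     each choice only has to avoid few values, and counting the fibres of the
     local functions shows that this is always possible.  This is done for
     the edgeless graphs (q >= 2), the directed triangle (q >= 3) and the
     6-vertex graph D6 (q >= 4), by reducing to purely combinatorial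
     "local choice" lemmas about functions on a finite type.
   - the gadget function: for an explicit f, in every configuration without
     fixed point the other coordinates exclude all but one value for the
     distinguished coordinate, which is then the "missing" value.  For the
     triangle f copies the in-neighbour's colour; for D6 the f_v are affine
     maps over Z/4, and three ring identities show that the three excluded
     values are pairwise distinct. *)

From mathcomp Require Import all_boot ssralg zmodp zify ring.
Import GRing.Theory.
Set Implicit Arguments. Unset Strict Implicit. Unset Printing Implicit Defensive.

Section MissingValue.
Variables (T : finType) (y0 : T).

Lemma exists_outside (X : {set T}) : #|X| < #|T| -> exists y, y \notin X.
Proof.
move=> small; case: (pickP [pred y | y \notin X]) => [y Xy | allX]; first by exists y.
suff /eqP XT : X == [set: T] by rewrite XT cardsT ltnn in small.
by rewrite -subTset; apply/subsetP => y _; move/negbFE: (allX y).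
Qed.

(* The chosen point outside X, or the default y0 if X is everything. *)
Definition missing (X : {set T}) : T := odflt y0 [pick y | y \notin X].

Lemma missing_notin (X : {set T}) : #|X| < #|T| -> missing X \notin X.
Proof.
move=> /exists_outside[y Xy]; rewrite /missing.
by case: pickP => [// | /(_ y)]; rewrite /= Xy.
Qed.

Lemma missing_unique (X : {set T}) (y : T) :
  #|X|.+1 = #|T| -> y \notin X -> y = missing X.
Proof.
move=> card_X Xy; have: #|~: X| == 1.
  by rewrite -(eqn_add2l #|X|) cardsC -card_X addn1.
case/cards1P=> w CXw; rewrite /missing.
case: pickP => [z Xz | /(_ y)]; last by rewrite /= Xy.
by move: Xy Xz; rewrite -!in_setC CXw !inE => /eqP-> /eqP->.
Qed.

End MissingValue.

Section Fibres.
Variables (A B : finType) (g : A -> B).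

Definition fibre (b : B) : {set A} := [set a | g a == b].

(* The fibres partition A. *)
Lemma sum_card_fibres : \sum_b #|fibre b| = #|A|.
Proof.
rewrite -sum1_card (partition_big g predT) //=.
by apply: eq_bigr => b _; rewrite sum1_card cardsE.
Qed.

Lemma small_fibre : #|A| < 2 * #|B| -> exists b, #|fibre b| <= 1.
Proof.
move=> card_A; case: (pickP [pred b | #|fibre b| <= 1]) => [b small_b | big].
  by exists b.
have : \sum_(b : B) 2 <= \sum_b #|fibre b|.
  by apply: leq_sum => b _; rewrite ltnNge; exact: negbT (big b).
by rewrite sum_card_fibres sum_nat_const mulnC leqNgt card_A.
Qed.

(* Distinct fibres are disjoint. *)
Lemma card_fibre2 (b b' : B) : b != b' -> #|fibre b| + #|fibre b'| <= #|A|.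
Proof.
move=> neq_bb'; rewrite -cardsUI.
have -> : fibre b :&: fibre b' = set0.
  apply/setP => a; rewrite !inE; apply/negP => /andP[/eqP-> /eqP eq_bb'].
  by rewrite eq_bb' eqxx in neq_bb'.
by rewrite cards0 addn0 max_card.
Qed.

Definition heavy (b : B) : bool := #|A| < 2 * #|fibre b|.

(* A value with a largest fibre (b0 is only a default for the search). *)
Definition heaviest (b0 : B) : B := [arg max_(b > b0) #|fibre b|].

(* Two heavy fibres cannot be disjoint, so a heavy value is the heaviest one. *)
Lemma heavy_heaviest (b0 b : B) : heavy b -> b = heaviest b0.
Proof.
rewrite /heaviest; case: arg_maxnP => // h _ h_max heavy_b.
apply/eqP; apply: contraT => neq_bh; have := card_fibre2 neq_bh.
have le_bh : #|fibre b| <= #|fibre h| := h_max b isT.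
rewrite /heavy in heavy_b => disjoint_bh; suff : False by []; lia.
Qed.

Lemma avoid_fibre (b : B) (s : seq A) :
  size s + #|fibre b| < #|A| -> exists y, g y != b /\ y \notin s.
Proof.
move=> small; have [|y] := @exists_outside A (fibre b :|: [set y in s]).
  apply: leq_ltn_trans small; apply: leq_trans (leq_card_setU _ _) _.
  by rewrite addnC leq_add2r cardsE card_size.
by rewrite !inE negb_or => /andP[gy_b y_s]; exists y.
Qed.

End Fibres.

(* Combinatorial core of the non-solvability proofs: given the local
   functions of a graph, written as functions of the in-neighbours' values,
   choose values that differ from all of them.  Below, [set n := #|T|] only
   makes the cardinality a single atom for lia (it may be elaborated through
   different coercion paths in hypotheses and in goals). *)
Section LocalChoice.
Variable T : finType.

(* Directed triangle 0 -> 1 -> 2 -> 0: x0 has a small fibre under G0, which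
   leaves two candidates for x2 after x1 is chosen. *)
Lemma cycle3_choice (G0 G1 G2 : T -> T) (T_gt2 : 2 < #|T|) :
  exists x0 x1 x2, [/\ G0 x2 != x0, G1 x0 != x1 & G2 x1 != x2].
Proof.
have [x0 small0] := small_fibre G0 (ltac:(lia) : #|T| < 2 * #|T|).
have [x1 x1_new] : exists x1, x1 \notin [set G1 x0].
  by apply: exists_outside; rewrite cards1; lia.
have [x2 [G0x2 x2_new]] : exists x2, G0 x2 != x0 /\ x2 \notin [:: G2 x1].
  by apply: avoid_fibre => /=; set n := #|T| in T_gt2 *; lia.
by exists x0, x1, x2; rewrite G0x2 eq_sym -in_set1 x1_new eq_sym -mem_seq1 x2_new.
Qed.

(* First stage for D6: a2 is hit by the heaviest value of F2 a0 for at most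
   one a0, a1 has a small fibre under F1 a2, and then a0 is chosen outside
   two sets of size at most one, so that all three fibres below are light. *)
Lemma D6_choice_light (F0 F1 F2 : T -> T -> T) (T_gt3 : 3 < #|T|) :
  exists a0 a1 a2, [/\ 2 * #|fibre (F0 a1) a0| <= #|T|,
    #|fibre (F1 a2) a1| <= 1 & 2 * #|fibre (F2 a0) a2| <= #|T|].
Proof.
have [z _] : exists z : T, z \notin set0 by apply: exists_outside; rewrite cards0; lia.
pose m a0 := heaviest (F2 a0) z.
have [a2 small_m] := small_fibre m (ltac:(lia) : #|T| < 2 * #|T|).
have [a1 small1] := small_fibre (F1 a2) (ltac:(lia) : #|T| < 2 * #|T|).
have [a0] : exists a0, a0 \notin fibre m a2 :|: [set heaviest (F0 a1) z].
  apply: exists_outside; apply: leq_ltn_trans (leq_card_setU _ _) _.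
  by rewrite cards1; set n := #|T| in T_gt3 *; lia.
rewrite !inE negb_or => /andP[m_a0 h_a0]; exists a0, a1, a2; split=> //.
  by rewrite leqNgt; apply: contra h_a0 => /(heavy_heaviest z)/eqP.
by rewrite leqNgt; apply: contra m_a0 => /(heavy_heaviest z)/eqP; rewrite eq_sym.
Qed.

(* Second stage for D6: choose two candidates x4, y4 at vertex 4 and matching
   candidates at vertex 5, then a3 avoiding both induced values at vertex 3;
   F4 a3 a1 a0 differs from x4 or from y4, which decides the configuration. *)
Lemma D6_choice (F0 F1 F2 : T -> T -> T) (F3 F4 F5 : T -> T -> T -> T)
    (T_gt3 : 3 < #|T|) :
  exists a0 a1 a2 a3 a4 a5,
    [/\ F0 a1 a5 != a0, F1 a2 a3 != a1 & F2 a0 a4 != a2] /\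
    [/\ F3 a5 a0 a2 != a3, F4 a3 a1 a0 != a4 & F5 a4 a2 a1 != a5].
Proof.
have [a0 [a1 [a2 [light0 small1 light2]]]] := D6_choice_light F0 F1 F2 T_gt3.
move: T_gt3 light0 light2; set n := #|T| => T_gt3 light0 light2.
have avoid (g : T -> T) (b : T) (s : seq T) :
  size s + #|fibre g b| < n -> exists y, g y != b /\ y \notin s.
  exact: avoid_fibre.
have [x4 [F2x4 _]] := avoid (F2 a0) a2 [::] (ltac:(rewrite /=; lia)).
have [y4 [F2y4 y4_new]] := avoid (F2 a0) a2 [:: x4] (ltac:(rewrite /=; lia)).
have [x5 [F0x5 x5_new]] :=
  avoid (F0 a1) a0 [:: F5 x4 a2 a1] (ltac:(rewrite /=; lia)).
have [y5 [F0y5 y5_new]] :=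
  avoid (F0 a1) a0 [:: F5 y4 a2 a1] (ltac:(rewrite /=; lia)).
have [a3 [F1a3 a3_new]] :=
  avoid (F1 a2) a1 [:: F3 x5 a0 a2; F3 y5 a0 a2] (ltac:(rewrite /=; lia)).
move: y4_new x5_new y5_new a3_new; rewrite !inE !negb_or.
move=> y4x4 x5_new y5_new /andP[a3x5 a3y5].
case: (eqVneq (F4 a3 a1 a0) x4) => [F4a3 | F4a3].
  by exists a0, a1, a2, a3, y4, y5; rewrite F4a3; split; split=> //; rewrite eq_sym.
by exists a0, a1, a2, a3, x4, x5; split; split=> //; rewrite eq_sym.
Qed.

End LocalChoice.

Lemma neq_from_diff (V : zmodType) (a b c d : V) :
  (a - b = c - d)%R -> c != d -> a != b.
Proof.
by move=> eq_diff; apply: contraNneq => eq_ab; rewrite -subr_eq0 -eq_diff eq_ab subrr.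
Qed.

(* Without arcs every f_v is constant, and x_v can avoid that constant. *)
Lemma edgeless_not_solvable (n q : nat) (E : rel 'I_n) :
  1 < q -> (forall u v, ~~ E u v) -> ~ q_solvable q E.
Proof.
move=> q_gt1 no_arc [f [Df Hf]].
pose c v := f (fun _ => Ordinal (ltnW q_gt1)) v.
have const x v : f x v = c v by apply: Df => u; rewrite (negbTE (no_arc u v)).
pose x v := missing (c v) [set c v].
have [v] := Hf x; rewrite const => /esym/eqP.
by apply/negP; rewrite -in_set1; apply: missing_notin; rewrite cards1 card_ord.
Qed.

(* Part (i): with f = 0 over [2], the only value without fixed point is 1. *)
Lemma single_vertex_gadget : q_gadget 2 single_vertex ord0.
Proof.
split; first by [].
split; first by apply: edgeless_not_solvable.
exists (fun _ _ => ord0), (fun _ => missing ord0 [set ord0]).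
split; [by [] | split=> // x ffree].
apply: missing_unique; first by rewrite cards1 card_ord.
by rewrite inE eq_sym; apply/eqP; exact: ffree.
Qed.

(* The directed triangle, with vertices in Z/3 and arcs v - 1 -> v. *)
Section DirectedTriangle.
Local Open Scope ring_scope.

Lemma ord3_ind (P : 'I_3 -> Prop) : P 0 -> P 1 -> P 2 -> forall v, P v.
Proof.
move=> P0 P1 P2 [[|[|[|k]]] Hk] //; [move: P0 | move: P1 | move: P2].
all: by congr P; apply/val_inj.
Qed.

Lemma cycle3E (u v : 'I_3) : cycle3 u v = (u == v - 1).
Proof. by elim/ord3_ind: u; elim/ord3_ind: v. Qed.

Lemma cycle3_total (u v : 'I_3) : u != v -> cycle3 u v || cycle3 v u.
Proof. by elim/ord3_ind: u; elim/ord3_ind: v. Qed.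

Lemma oriented_cycle3 : oriented_graph cycle3.
Proof. by move=> u v; elim/ord3_ind: u; elim/ord3_ind: v. Qed.

(* f_v only depends on x (v - 1), so f_v x = G v (x (v - 1)). *)
Lemma cycle3_not_solvable (q : nat) : (2 < q)%N -> ~ q_solvable q cycle3.
Proof.
move=> q_gt2 [f [Df Hf]].
pose G v b := f (fun _ : 'I_3 => b) v.
have local x v : f x v = G v (x (v - 1)).
  by apply: Df => u; rewrite cycle3E => /eqP->.
have [x0 [x1 [x2 [G0x2 G1x0 G2x1]]]] :=
  cycle3_choice (G 0) (G 1) (G 2) (ltac:(by rewrite card_ord)).
have [v] := Hf (fun v => nth x0 [:: x0; x1; x2] v); rewrite local; apply/eqP.
by elim/ord3_ind: v.
Qed.

(* Part (ii): with f_v(x) = x_(v-1), a configuration without fixed point is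
   injective, so x_d is the colour missing from the other two vertices. *)
Lemma cycle3_gadget (d : 'I_3) : q_gadget 3 cycle3 d.
Proof.
split; first exact: oriented_cycle3.
split; first by apply: cycle3_not_solvable.
exists (fun (x : 'I_3 -> 'I_3) v => x (v - 1)).
exists (fun x => missing (0 : 'I_3) (x @: [set~ d])); split; [|split].
- by move=> v x y agree; apply: agree; rewrite cycle3E.
- move=> x y agree; congr missing; apply: eq_in_imset => u.
  by rewrite !inE; exact: agree.
move=> x ffree; have inj_x : injective x.
  move=> u v xuv; apply/eqP; apply: contraT => /cycle3_total.
  case/orP; rewrite cycle3E => /eqP uv_arc; [case: (ffree v) | case: (ffree u)];
    by rewrite -uv_arc xuv.
apply: missing_unique; first by rewrite card_imset // cardsC1 card_ord.
by rewrite mem_imset // !inE eqxx.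
Qed.

End DirectedTriangle.

Section GraphD6.
Local Open Scope ring_scope.

Lemma ord6_ind (P : 'I_6 -> Prop) :
  P 0 -> P 1 -> P 2 -> P 3 -> P 4 -> P 5 -> forall v, P v.
Proof.
move=> P0 P1 P2 P3 P4 P5 [[|[|[|[|[|[|k]]]]]] Hk] //;
  [move: P0 | move: P1 | move: P2 | move: P3 | move: P4 | move: P5];
  by congr P; apply/val_inj.
Qed.

Lemma oriented_D6 : oriented_graph D6.
Proof. by move=> u v; elim/ord6_ind: u; elim/ord6_ind: v. Qed.

(* The local function at v is f evaluated on a configuration that is the
   default z outside the in-neighbourhood of v:
   N(0) = {1,5}, N(1) = {2,3}, N(2) = {0,4}, N(3) = {5,0,2}, N(4) = {3,1,0},
   N(5) = {4,2,1}. *)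
Lemma D6_not_solvable (q : nat) : (3 < q)%N -> ~ q_solvable q D6.
Proof.
move=> q_gt3 [f [Df Hf]].
pose z : 'I_q := Ordinal (ltnW (ltnW (ltnW q_gt3))).
pose cfg (a0 a1 a2 a3 a4 a5 : 'I_q) (v : 'I_6) :=
  nth a0 [:: a0; a1; a2; a3; a4; a5] v.
pose F0 a1 a5 := f (cfg z a1 z z z a5) 0.
pose F1 a2 a3 := f (cfg z z a2 a3 z z) 1.
pose F2 a0 a4 := f (cfg a0 z z z a4 z) 2.
pose F3 a5 a0 a2 := f (cfg a0 z a2 z z a5) 3.
pose F4 a3 a1 a0 := f (cfg a0 a1 z a3 z z) 4.
pose F5 a4 a2 a1 := f (cfg z a1 a2 z a4 z) 5.
have [a0 [a1 [a2 [a3 [a4 [a5 [[H0 H1 H2] [H3 H4 H5]]]]]]]] :=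
  D6_choice F0 F1 F2 F3 F4 F5 (ltac:(by rewrite card_ord)).
have [v] := Hf (cfg a0 a1 a2 a3 a4 a5); apply/eqP.
elim/ord6_ind: v.
- rewrite (Df _ _ (cfg z a1 z z z a5)); first exact: H0.
  by case=> [[|[|[|[|[|[|k]]]]]] Hk].
- rewrite (Df _ _ (cfg z z a2 a3 z z)); first exact: H1.
  by case=> [[|[|[|[|[|[|k]]]]]] Hk].
- rewrite (Df _ _ (cfg a0 z z z a4 z)); first exact: H2.
  by case=> [[|[|[|[|[|[|k]]]]]] Hk].
- rewrite (Df _ _ (cfg a0 z a2 z z a5)); first exact: H3.
  by case=> [[|[|[|[|[|[|k]]]]]] Hk].
- rewrite (Df _ _ (cfg a0 a1 z a3 z z)); first exact: H4.
  by case=> [[|[|[|[|[|[|k]]]]]] Hk].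
- rewrite (Df _ _ (cfg z a1 a2 z a4 z)); first exact: H5.
  by case=> [[|[|[|[|[|[|k]]]]]] Hk].
Qed.

Definition D6_fun (x : 'I_6 -> 'I_4) (v : 'I_6) : 'I_4 :=
  match val v with
  | 0 => - (x 1 + x 5)
  | 1 => x 2 - x 3
  | 2 => x 0 + x 4
  | 3 => x 5 + x 0 + x 2
  | 4 => x 1 + x 3 - x 0
  | _ => x 4 - x 1 - x 2
  end.

(* Values that x_4 cannot take without a fixed point: at vertex 4, 2 and 5
   respectively. *)
Definition D6_forbidden (x : 'I_6 -> 'I_4) : {set 'I_4} :=
  [set y in [:: x 1 + x 3 - x 0; x 2 - x 0; x 5 + x 1 + x 2]].

Lemma D6_fun_local : D_function D6 D6_fun.
Proof.
by move=> v x y agree; elim/ord6_ind: v agree => agree; rewrite /D6_fun /= !agree.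
Qed.

Lemma D6_forbidden_local (x y : 'I_6 -> 'I_4) :
  (forall v, v != 4 -> x v = y v) -> D6_forbidden x = D6_forbidden y.
Proof. by move=> agree; rewrite /D6_forbidden !agree. Qed.

(* Without fixed point the three forbidden values are distinct (by the
   conditions at vertices 1, 3 and 0) and x_4 is none of them. *)
Lemma D6_fixed_point_free (x : 'I_6 -> 'I_4) :
  (forall v, D6_fun x v <> x v) ->
  #|D6_forbidden x|.+1 = #|'I_4| /\ x 4 \notin D6_forbidden x.
Proof.
move=> ffree.
have [/eqP f0 /eqP f1 /eqP f2] := And3 (ffree 0) (ffree 1) (ffree 2).
have [/eqP f3 /eqP f4 /eqP f5] := And3 (ffree 3) (ffree 4) (ffree 5).
rewrite /D6_fun /= in f0 f1 f2 f3 f4 f5.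
split; last first.
  rewrite !inE !negb_or eq_sym f4 /=; apply/andP; split.
    by apply: (neq_from_diff _ f2); ring.
  by apply: (neq_from_diff _ f5); ring.
rewrite cardsE card_ord; apply/eqP; rewrite (card_uniqP _) //=.
rewrite !inE !negb_or andbT -andbA; apply/and3P; split.
- by rewrite eq_sym; apply: (neq_from_diff _ f1); ring.
- by rewrite eq_sym; apply: (neq_from_diff _ f3); ring.
- by apply: (neq_from_diff _ f0); ring.
Qed.

Lemma D6_gadget : q_gadget 4 D6 (inord 4).
Proof.
have -> : inord 4 = 4 :> 'I_6 by apply/val_inj; rewrite /= inordK.
split; first exact: oriented_D6.
split; first by apply: D6_not_solvable.
exists D6_fun, (fun x => missing (0 : 'I_4) (D6_forbidden x)); split; [|split].
- exact: D6_fun_local.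
- by move=> x y /D6_forbidden_local ->.
move=> x /D6_fixed_point_free[card_forbidden x4_allowed].
exact: missing_unique.
Qed.

End GraphD6.

Theorem proposition9 :
  q_gadget 2 single_vertex (ord0 : 'I_1) /\
  (forall d : 'I_3, q_gadget 3 cycle3 d) /\
  q_gadget 4 D6 (inord 4 : 'I_6).
Proof.
split; first exact: single_vertex_gadget.
split; first exact: cycle3_gadget.
exact: D6_gadget.
Qed.
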